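(* For $i=1,2$ let $P_i$ be an irreducible aperiodic transition matrix on the countable set $X_i$ with root $e_i$ satisfying a ratio limit theorem with kernel $h_i$ and ratio limit kernel $H_i(x_i,y_i)=h_i(x_i,y_i)/h_i(e_i,y_i)$; let $\partial_R X_i$ be the ratio limit boundary of $(X_i,P_i)$ and denote also by $H_i(x_i,\cdot)$ the continuous extensions to $\partial_R X_i$. Let $P=P_1\otimes P_2$ on $X=X_1\times X_2$, $p(x_1x_2,y_1y_2)=p_1(x_1,y_1)p_2(x_2,y_2)$, which satisfies a ratio limit theorem with $h(x_1x_2,y_1y_2)=h_1(x_1,y_1)h_2(x_2,y_2)$ and $H(x_1x_2,y_1y_2)=H_1(x_1,y_1)H_2(x_2,y_2)$. On the product boundary $B=(\partial_R X_1\times\partial_R X_2)\cup(X_1\times\partial_R X_2)\cup(\partial_R X_1\times X_2)$ define $\eta_1\eta_2\approx\zeta_1\zeta_2$ iff $H_1(x_1,\eta_1)H_2(x_2,\eta_2)=H_1(x_1,\zeta_1)H_2(x_2,\zeta_2)$ for all $x_1x_2\in X_1\times X_2$ (where $H_i(x_i,y_i)$ for $y_i\in X_i$ is the original kernel). Then the ratio limit boundary of $(X,P)$ is the image of the product boundary $B$ (inside the product compactification of the two ratio limit compactifications) under the factor map of $\approx$, and the extension of $H(x_1x_2,\cdot)$ to it is $H(x_1x_2,\xi)=H_1(x_1,\eta_1)H_2(x_2,\eta_2)$ for any representative $\eta_1\eta_2$ of the class $\xi$.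
   Context: Ratio limit theorem for an irreducible aperiodic transition matrix $P$ on a countable set $X$ with root $e$: $h(x,y)=\lim_n p^{(n)}(x,y)/p^{(n)}(e,e)\in(0,\infty)$ exists for all $x,y$; ratio limit kernel $H(x,y)=h(x,y)/h(e,y)$. The ratio limit compactification is the unique (up to homeomorphism fixing $X$) compact Hausdorff space containing $X$ as discrete open dense subset to which every $H(x,\cdot)$ extends continuously and whose boundary points (points outside $X$, forming the ratio limit boundary) are separated by these extensions. Product compactification of compactifications $\mathcal C(X_1),\mathcal C(X_2)$ with boundaries $\partial X_i$: the space $\mathcal C(X_1)\times\mathcal C(X_2)$ with product topology; its boundary is $(\partial X_1\times\partial X_2)\cup(X_1\times\partial X_2)\cup(\partial X_1\times X_2)$; elements are written $w_1w_2$. *)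

From HB Require Import structures.
From mathcomp Require Import all_boot all_order all_algebra.
From mathcomp Require Import all_classical all_reals all_analysis.
Set Implicit Arguments. Unset Strict Implicit. Unset Printing Implicit Defensive.
Import Order.TTheory GRing.Theory Num.Theory.
Import numFieldNormedType.Exports.
Local Open Scope classical_set_scope.
Local Open Scope ring_scope.

Section Markov.
Context {R : realType} {X : countType}.

Definition transition_matrix (P : X -> X -> R) : Prop :=
  (forall x y, 0 <= P x y) /\
  (forall x, (\esum_(y in [set: X]) (P x y)%:E = 1)%E).

Fixpoint mpow (P : X -> X -> R) (n : nat) (x y : X) : R :=
  match n with
  | 0 => if x == y then 1 else 0
  | n'.+1 => fine (\esum_(z in [set: X]) (mpow P n' x z * P z y)%:E)
  end.

Definition irreducible_tm (P : X -> X -> R) : Prop :=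
  forall x y, exists n, 0 < mpow P n x y.

(* period 1: the gcd of the return times {n | p^(n)(x,x) > 0} is 1 *)
Definition aperiodic_tm (P : X -> X -> R) : Prop :=
  forall (x : X) (d : nat),
    (forall n, 0 < mpow P n x x -> (d %| n)%N) -> d = 1%N.

Definition ratio_limit (P : X -> X -> R) (e : X) (h : X -> X -> R) : Prop :=
  forall x y, 0 < h x y /\
    (fun n => mpow P n x y / mpow P n e e) @ \oo --> h x y.

Definition RLkernel (e : X) (h : X -> X -> R) (x y : X) : R := h x y / h e y.

(* (K, i, F) is the ratio limit compactification of (X,P) (with kernel h and
   root e): K compact Hausdorff, i : X -> K embeds X as a discrete open dense
   subset, F x : K -> R is the continuous extension of H(x, .), and these
   extensions separate the boundary points (points of K outside i(X)). *)
Definition ratio_limit_compactification (e : X) (h : X -> X -> R)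
    (K : topologicalType) (i : X -> K) (F : X -> K -> R) : Prop :=
  [/\ compact [set: K] /\ hausdorff_space K,
      [/\ injective i, open (range i) & forall x, open [set i x]],
      closure (range i) = [set: K],
      (forall x, continuous (F x) /\ forall y, F x (i y) = RLkernel e h x y) &
      (forall xi zeta, ~ range i xi -> ~ range i zeta -> xi <> zeta ->
         exists x, F x xi <> F x zeta)].
End Markov.

Definition tensor_tm {R : realType} {X1 X2 : Type}
    (P1 : X1 -> X1 -> R) (P2 : X2 -> X2 -> R) (x y : X1 * X2) : R :=
  P1 x.1 y.1 * P2 x.2 y.2.

Definition prod_boundary {X1 X2 : Type} {K1 K2 : Type}
    (i1 : X1 -> K1) (i2 : X2 -> K2) : set (K1 * K2) :=
  [set w | ~ range i1 w.1 \/ ~ range i2 w.2].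

Definition prod_approx {R : realType} {X1 X2 : Type} {K1 K2 : Type}
    (F1 : X1 -> K1 -> R) (F2 : X2 -> K2 -> R) (w v : K1 * K2) : Prop :=
  forall (x1 : X1) (x2 : X2),
    F1 x1 w.1 * F2 x2 w.2 = F1 x1 v.1 * F2 x2 v.2.

(* The n-step transition probabilities of P1 (x) P2 factor as
   p^(n)(x1x2, y1y2) = p1^(n)(x1, y1) p2^(n)(x2, y2); this needs that an
   extended sum over X1 * X2 of a product of nonnegative terms is the product
   of the two sums.  Hence the ratio limit theorem holds for the product chain
   with kernel h1 h2, and its ratio limit kernel is H1 H2.

   We prove a general quotient property of compactifications:
   if T and K are compactifications of the same discrete set Y, the family
   (F x) extends the kernel continuously to K and separates the boundary of K,
   and (Phi x) are continuous functions on T agreeing with the kernel on Y,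
   then the limit of y -> i y as j y tends to w in T defines a continuous
   surjection pi : T -> K with pi (j y) = i y, mapping the boundary of T into
   that of K, and satisfying F x (pi w) = Phi x w.  Points of the boundary of T
   thus have the same image exactly when all the Phi x agree on them.  The
   theorem applies this to T = K1 * K2 with Phi (x1, x2) w = F1 x1 w.1 * F2 x2 w.2. *)
From HB Require Import structures.
From mathcomp Require Import all_boot all_order all_algebra.
From mathcomp Require Import all_classical all_reals all_analysis.
Import Order.TTheory GRing.Theory Num.Theory.
Import numFieldNormedType.Exports.
Local Open Scope classical_set_scope.
Local Open Scope ring_scope.

Lemma esumZl_fin (R : realType) (T : choiceType) (S : set T) (a : T -> \bar R)
    (r : R) : 0 <= r -> (forall x, (0 <= a x)%E) ->
  (\esum_(x in S) (r%:E * a x) = r%:E * \esum_(x in S) a x)%E.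
Proof.
move=> r0 a0; rewrite /esum -ereal_supZl//; last first.
  by apply/set0P; exists 0%E; exists set0; [exact: fsets_set0|rewrite fsbig_set0].
congr ereal_sup; apply/seteqP; split=> y /=.
  case=> A [finA AS] <-; exists (\sum_(x \in A) a x)%E; first by exists A.
  by rewrite !fsbig_finite// ge0_sume_distrr.
case=> _ [A [finA AS] <-] <-; exists A => //.
by rewrite !fsbig_finite// ge0_sume_distrr.
Qed.

(* The same for a possibly infinite constant c >= 0: when c = +oo both sides
   are +oo unless the family vanishes identically. *)
Lemma esumZl (R : realType) (T : choiceType) (a : T -> \bar R) (c : \bar R) :
  (0 <= c)%E -> (forall x, (0 <= a x)%E) ->
  (\esum_(x in [set: T]) (c * a x) = c * \esum_(x in [set: T]) a x)%E.
Proof.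
move=> c0 a0; case: c c0 => [r|_|//]; first by rewrite lee_fin => r0; apply: esumZl_fin.
have [a_eq0|/existsNP [x0 /eqP ax0_neq0]] := pselect (forall x, a x = 0%E).
  by rewrite !esum1 ?mule0// => x _; rewrite a_eq0 ?mule0.
have ax0_gt0 : (0 < a x0)%E by rewrite lt0e ax0_neq0 a0.
have fin_x0 : finite_set [set x0] /\ [set x0] `<=` [set: T].
  by split => //; exact: finite_set1.
have sum_gt0 : (0 < \esum_(x in [set: T]) a x)%E.
  by apply: (lt_le_trans ax0_gt0); apply: esum_ge; exists [set x0]; rewrite ?fsbig_set1.
rewrite gt0_mulye//; apply/eqP; rewrite eq_le leey /=.
by apply: esum_ge; exists [set x0]; rewrite ?fsbig_set1 ?gt0_mulye.
Qed.

Lemma esum_prod (R : realType) (T1 T2 : choiceType) (a : T1 -> R) (b : T2 -> R) :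
  (forall x, 0 <= a x) -> (forall y, 0 <= b y) ->
  (\esum_(z in [set: T1 * T2]) (a z.1 * b z.2)%:E =
   (\esum_(x in [set: T1]) (a x)%:E) * (\esum_(y in [set: T2]) (b y)%:E))%E.
Proof.
move=> a0 b0.
have -> : [set: T1 * T2] = [set: T1] `*`` (fun _ => [set: T2]).
  by apply/seteqP; split => z.
rewrite -(esum_esum (a := fun x y => (a x * b y)%:E)); last first.
  by move=> x y _ _; rewrite lee_fin mulr_ge0.
transitivity (\esum_(x in [set: T1]) ((a x)%:E * \esum_(y in [set: T2]) (b y)%:E))%E.
  by congr esum; apply: funext => x; rewrite -esumZl_fin.
under eq_esum do rewrite muleC.
rewrite esumZl; first by rewrite muleC.
- by apply: esum_ge0 => y _; rewrite lee_fin.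
- by move=> x; rewrite lee_fin.
Qed.

(* [fine] is multiplicative on nonnegative extended reals (with fine (+oo) = 0). *)
Lemma fineM_ge0 (R : realType) (x y : \bar R) : (0 <= x)%E -> (0 <= y)%E ->
  fine (x * y)%E = fine x * fine y.
Proof.
case: x => [r| |] //; case: y => [s| |] //= => x0 y0.
- rewrite mulr0; have [->|r_neq0] := eqVneq r 0; first by rewrite mul0e.
  by rewrite gt0_muley // lte_fin lt_neqAle eq_sym r_neq0 -lee_fin.
- rewrite mul0r; have [->|s_neq0] := eqVneq s 0; first by rewrite mule0.
  by rewrite gt0_mulye // lte_fin lt_neqAle eq_sym s_neq0 -lee_fin.
- by rewrite mulr0.
Qed.

Lemma mpow_ge0 (R : realType) (X : countType) (P : X -> X -> R) :
  (forall x y, 0 <= P x y) -> forall n x y, 0 <= mpow P n x y.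
Proof.
move=> P0; elim=> [|n IH] x y /=; first by case: eqP.
by apply: fine_ge0; apply: esum_ge0 => z _; rewrite lee_fin mulr_ge0.
Qed.

Lemma mpow_tensor (R : realType) (X1 X2 : countType)
    (P1 : X1 -> X1 -> R) (P2 : X2 -> X2 -> R) :
  (forall x y, 0 <= P1 x y) -> (forall x y, 0 <= P2 x y) ->
  forall n (x y : X1 * X2),
  mpow (tensor_tm P1 P2) n x y = mpow P1 n x.1 y.1 * mpow P2 n x.2 y.2.
Proof.
move=> P10 P20; elim=> [|n IH] [x1 x2] [y1 y2] /=.
  by rewrite xpair_eqE; case: eqP; case: eqP => /=; rewrite ?mulr1 ?mulr0.
have step_ge0 (X : countType) (P : X -> X -> R) u v : (forall x y, 0 <= P x y) ->
    (0 <= \esum_(z in [set: X]) (mpow P n u z * P z v)%:E)%E.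
  by move=> P0; apply: esum_ge0 => z _; rewrite lee_fin mulr_ge0// mpow_ge0.
rewrite -fineM_ge0 ?step_ge0// -esum_prod; last 2 first.
- by move=> z; rewrite mulr_ge0// mpow_ge0.
- by move=> z; rewrite mulr_ge0// mpow_ge0.
by congr fine; congr esum; apply: funext => z; rewrite IH mulrACA.
Qed.

Lemma ratio_limit_tensor (R : realType) (X1 X2 : countType)
    (P1 : X1 -> X1 -> R) (P2 : X2 -> X2 -> R) (e1 : X1) (e2 : X2)
    (h1 : X1 -> X1 -> R) (h2 : X2 -> X2 -> R) :
  (forall x y, 0 <= P1 x y) -> (forall x y, 0 <= P2 x y) ->
  ratio_limit P1 e1 h1 -> ratio_limit P2 e2 h2 ->
  ratio_limit (tensor_tm P1 P2) (e1, e2) (fun x y => h1 x.1 y.1 * h2 x.2 y.2).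
Proof.
move=> P10 P20 rl1 rl2 x y; split; first by rewrite mulr_gt0 ?(rl1 _ _).1 ?(rl2 _ _).1.
have -> : (fun n => mpow (tensor_tm P1 P2) n x y / mpow (tensor_tm P1 P2) n (e1, e2) (e1, e2))
    = (fun n => (mpow P1 n x.1 y.1 / mpow P1 n e1 e1) *
                (mpow P2 n x.2 y.2 / mpow P2 n e2 e2)).
  by apply/funext => n; rewrite !mpow_tensor // invfM mulrACA.
exact: cvgM (rl1 _ _).2 (rl2 _ _).2.
Qed.

Lemma RLkernel_tensor (R : realType) (X1 X2 : countType) (e1 : X1) (e2 : X2)
    (h1 : X1 -> X1 -> R) (h2 : X2 -> X2 -> R) (x y : X1 * X2) :
  RLkernel (e1, e2) (fun x y => h1 x.1 y.1 * h2 x.2 y.2) x y =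
  RLkernel e1 h1 x.1 y.1 * RLkernel e2 h2 x.2 y.2.
Proof. by rewrite /RLkernel invfM mulrACA. Qed.

(* The trace on Y of the neighbourhood filter of t under g : Y -> T; its
   limits along g encode the continuous extension to T of functions on Y. *)
Definition trace_nbhs {Y : Type} {T : topologicalType} (g : Y -> T) (t : T) :
    set_system Y :=
  filter_from (nbhs t) (fun U => g @^-1` U).

Lemma dense_range_nbhs {Y : Type} {T : topologicalType} (g : Y -> T) :
  closure (range g) = [set: T] -> forall (t : T) U, nbhs t U -> exists y, U (g y).
Proof.
move=> g_dense t U nU; have : closure (range g) t by rewrite g_dense.
by move=> /(_ U nU) [_ [[y _ <-] Ugy]]; exists y.
Qed.

Lemma trace_nbhs_proper {Y : Type} {T : topologicalType} (g : Y -> T) t :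
  closure (range g) = [set: T] -> ProperFilter (trace_nbhs g t).
Proof.
move=> g_dense; apply: filter_from_proper.
  apply: filter_from_filter; first by exists setT; exact: filterT.
  by move=> U V nU nV; exists (U `&` V); first exact: filterI.
by move=> U /(dense_range_nbhs _ g_dense) [y Uy]; exists y.
Qed.

Lemma trace_nbhs_cvg {Y : Type} {T : topologicalType} (g : Y -> T) t :
  g @ trace_nbhs g t --> t.
Proof. by move=> U nU; exists U. Qed.

Lemma cluster_cvg_value {R : realType} {T : topologicalType} {Y : Type}
    {G : set_system Y} {g : Y -> T} {f : T -> R} {c : Y -> R} {t : T} {l : R} :
  Filter G -> {for t, continuous f} -> (forall y, f (g y) = c y) ->
  cluster (g @ G) t -> c @ G --> l -> f t = l.
Proof.
move=> FG ft fgc cl cvl.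
have cl_ft : cluster (c @ G) (f t).
  move=> A B cA nB.
  have gA : (g @ G) (f @^-1` A).
    rewrite /= /fmap; suff -> : g @^-1` (f @^-1` A) = c @^-1` A by [].
    by apply/funext => y; rewrite /preimage /= fgc.
  have [s [As Bs]] := cl _ _ gA (ft _ nB).
  by exists (f s).
by have /Rhausdorff := cvg_cluster cvl cl_ft.
Qed.

Section CompactificationQuotient.
Variables (R : realType) (Y I : Type) (T K : topologicalType).
Variables (j : Y -> T) (i : Y -> K) (Phi : I -> T -> R) (F : I -> K -> R).
Hypotheses (compactT : compact [set: T]) (hausT : hausdorff_space T)
  (inj_j : injective j) (isolated_j : forall y, open [set j y])
  (dense_j : closure (range j) = [set: T]).
Hypotheses (compactK : compact [set: K]) (hausK : hausdorff_space K)
  (inj_i : injective i) (isolated_i : forall y, open [set i y])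
  (dense_i : closure (range i) = [set: K]).
Hypotheses (cont_Phi : forall x, continuous (Phi x))
  (cont_F : forall x, continuous (F x))
  (F_Phi : forall x y, F x (i y) = Phi x (j y))
  (sepF : forall xi zeta, ~ range i xi -> ~ range i zeta -> xi <> zeta ->
     exists x, F x xi <> F x zeta).

Lemma boundary_eq (xi zeta : K) : ~ range i xi -> ~ range i zeta ->
  (forall x, F x xi = F x zeta) -> xi = zeta.
Proof.
move=> xi_bd zeta_bd eqF; apply: contrapT => neq.
by have [x /(_ (eqF x))] := sepF _ _ xi_bd zeta_bd neq.
Qed.

Lemma cluster_values {w : T} {xi : K} : cluster (i @ trace_nbhs j w) xi ->
  forall x, F x xi = Phi x w.
Proof.
move=> cl x; have PF := trace_nbhs_proper j w dense_j.
apply: (cluster_cvg_value (c := Phi x \o j) PF (cont_F x xi) (F_Phi x) cl).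
by move=> A nA; exact: (trace_nbhs_cvg j w _ (cont_Phi x w _ nA)).
Qed.

(* At the isolated point j y the trace is generated by {y}. *)
Lemma cluster_at_j {y : Y} {xi : K} : cluster (i @ trace_nbhs j (j y)) xi -> xi = i y.
Proof.
move=> cl; apply: hausK => A B nA nB; exists (i y); split; last exact: nbhs_singleton.
have iy : (i @ trace_nbhs j (j y)) [set i y].
  exists [set j y]; last by move=> z /inj_j ->.
  by apply: open_nbhs_nbhs; split; [exact: isolated_j|].
by have [k [/= -> ?]] := cl _ _ iy nA.
Qed.

Lemma cluster_off_j {w : T} {xi : K} : ~ range j w -> cluster (i @ trace_nbhs j w) xi ->
  ~ range i xi.
Proof.
move=> w_bd cl [y _ iy_xi]; apply: w_bd.
have near_w : forall U, nbhs w U -> U (j y).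
  move=> U nU.
  have iU : (i @ trace_nbhs j w) (i @` (j @^-1` U)).
    by exists U => // z Uz; exists z.
  have ny : nbhs xi [set i y].
    by apply: open_nbhs_nbhs; split; [exact: isolated_i|rewrite iy_xi].
  by have [k [[z Uz <-] /= /inj_i <-]] := cl _ _ iU ny.
exists y => //; apply/esym/hausT => A B nA nB.
by exists (j y); split; [exact: near_w|exact: nbhs_singleton].
Qed.

Lemma exists_cluster (w : T) : exists xi, cluster (i @ trace_nbhs j w) xi.
Proof.
have PF := trace_nbhs_proper j w dense_j.
by have [xi [_ cl]] := compactK (i @ trace_nbhs j w) _ filterT; exists xi.
Qed.

(* The quotient map: a chosen cluster point, in fact the limit (see [pi_cvg]). *)
Definition pi (w : T) : K := projT1 (cid (exists_cluster w)).

Lemma pi_cluster (w : T) : cluster (i @ trace_nbhs j w) (pi w).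
Proof. exact: projT2 (cid (exists_cluster w)). Qed.

Lemma pi_j (y : Y) : pi (j y) = i y.
Proof. exact: cluster_at_j (pi_cluster _). Qed.

Lemma pi_values (x : I) (w : T) : F x (pi w) = Phi x w.
Proof. exact: cluster_values (pi_cluster w) x. Qed.

Lemma pi_boundary (w : T) : ~ range j w -> ~ range i (pi w).
Proof. by move=> w_bd; apply: cluster_off_j w_bd (pi_cluster _). Qed.

Lemma pi_eq_boundary (w v : T) : ~ range j w -> ~ range j v ->
  pi w = pi v <-> forall x, Phi x w = Phi x v.
Proof.
move=> w_bd v_bd; split => [eq_wv x | eq_Phi]; first by rewrite -!pi_values eq_wv.
apply: boundary_eq; [exact: pi_boundary|exact: pi_boundary|].
by move=> x; rewrite !pi_values.
Qed.

(* pi w is the only cluster point, hence (K being compact) the limit. *)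
Lemma cluster_pi (w : T) : cluster (i @ trace_nbhs j w) = [set pi w].
Proof.
apply/seteqP; split => xi /=; last by move=> ->; exact: pi_cluster.
have [[y _ <-] cl|w_bd cl] := pselect (range j w).
  by rewrite pi_j; exact: cluster_at_j cl.
apply: boundary_eq; [exact: cluster_off_j cl|exact: pi_boundary|].
by move=> x; rewrite pi_values (cluster_values cl).
Qed.

Lemma pi_cvg (w : T) : i @ trace_nbhs j w --> pi w.
Proof.
have PF := trace_nbhs_proper j w dense_j.
exact: (compact_cluster_set1 hausK compactK filterT _ filterT (cluster_pi w)).
Qed.

(* Continuity: by regularity of K, a closed neighbourhood C of pi w inside V
   contains i y for y near w, hence contains pi w' for w' near w. *)
Lemma pi_continuous : continuous pi.
Proof.
move=> w V nV.
have [C nC CV] := compact_regular hausK compactK (filterT : nbhs (pi w) _) nV.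
have [U nU UC] := pi_cvg w _ nC.
rewrite nbhsE in nU; case: nU => U0 [oU0 U0w] U0U.
rewrite /= nbhs_simpl; apply: filterS (open_nbhs_nbhs (conj oU0 U0w)).
move=> w' U0w'; apply: CV => B nB.
have iC : (i @ trace_nbhs j w') C.
  by exists U0; [exact: open_nbhs_nbhs|move=> z U0z; apply: UC; apply: U0U].
exact: pi_cluster w' _ _ iC nB.
Qed.

(* Surjectivity: a boundary point k is the image of a cluster point in T of
   j along the trace at k, by compactness of T and separation in K. *)
Lemma pi_surjective (k : K) : exists w, pi w = k.
Proof.
have [[y _ <-]|k_bd] := pselect (range i k); first by exists (j y); exact: pi_j.
have PF := trace_nbhs_proper i k dense_i.
have [w [_ cl]] := compactT (j @ trace_nbhs i k) _ filterT.
have Phi_w : forall x, Phi x w = F x k.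
  move=> x; apply: (cluster_cvg_value (c := F x \o i) PF (cont_Phi x w)
    (fun y => esym (F_Phi x y)) cl).
  by move=> A nA; exact: (trace_nbhs_cvg i k _ (cont_F x k _ nA)).
have w_bd : ~ range j w.
  move=> [y _ jy_w]; apply: k_bd; exists y => //.
  apply: hausK => A B nA nB; exists (i y); split; first exact: nbhs_singleton.
  have jB : (j @ trace_nbhs i k) (j @` (i @^-1` B)) by exists B => // z Bz; exists z.
  have ny : nbhs w [set j y].
    by apply: open_nbhs_nbhs; split; [exact: isolated_j|rewrite -jy_w].
  by have [_ [[z Bz <-] /= /inj_j <-]] := cl _ _ jB ny.
exists w; apply: boundary_eq => //; first exact: pi_boundary.
by move=> x; rewrite pi_values Phi_w.
Qed.

Lemma compactification_quotient : exists pi : T -> K,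
  [/\ continuous pi /\ (forall k, exists w, pi w = k),
      (forall y, pi (j y) = i y),
      (forall w, ~ range j w -> ~ range i (pi w)),
      (forall w v, ~ range j w -> ~ range j v ->
         pi w = pi v <-> forall x, Phi x w = Phi x v) &
      (forall x w, F x (pi w) = Phi x w)].
Proof.
exists pi; split; [split|exact: pi_j|exact: pi_boundary|exact: pi_eq_boundary|exact: pi_values].
- exact: pi_continuous.
- exact: pi_surjective.
Qed.

End CompactificationQuotient.

Lemma open_set1X {K1 K2 : topologicalType} (a : K1) (b : K2) :
  open [set a] -> open [set b] -> open [set (a, b)].
Proof.
move=> oa ob; rewrite openE => _ ->.
exists ([set a], [set b]); first by split; apply: open_nbhs_nbhs.
by move=> [x y] [/= -> ->].
Qed.

Lemma hausdorff_prod {K1 K2 : topologicalType} :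
  hausdorff_space K1 -> hausdorff_space K2 -> hausdorff_space (K1 * K2)%type.
Proof.
move=> h1 h2 [a1 a2] [b1 b2] cl; congr pair.
- apply: h1 => A B nA nB.
  have nAT : nbhs (a1, a2) (A `*` setT) by exists (A, setT) => //; split => //; exact: filterT.
  have nBT : nbhs (b1, b2) (B `*` setT) by exists (B, setT) => //; split => //; exact: filterT.
  by have [[x y] [[/= Ax _] [/= Bx _]]] := cl _ _ nAT nBT; exists x.
- apply: h2 => A B nA nB.
  have nTA : nbhs (a1, a2) (setT `*` A) by exists (setT, A) => //; split => //; exact: filterT.
  have nTB : nbhs (b1, b2) (setT `*` B) by exists (setT, B) => //; split => //; exact: filterT.
  by have [[x y] [[_ /= Ay] [_ /= By]]] := cl _ _ nTA nTB; exists y.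
Qed.

Lemma dense_rangeX {X1 X2 : Type} {K1 K2 : topologicalType}
    (i1 : X1 -> K1) (i2 : X2 -> K2) :
  closure (range i1) = [set: K1] -> closure (range i2) = [set: K2] ->
  closure (range (fun z : X1 * X2 => (i1 z.1, i2 z.2))) = [set: K1 * K2].
Proof.
move=> dense1 dense2; rewrite eqEsubset; split => // w _ U [[A B] /= [nA nB] ABU].
have [x1 Ax1] := dense_range_nbhs _ dense1 _ _ nA.
have [x2 Bx2] := dense_range_nbhs _ dense2 _ _ nB.
by exists (i1 x1, i2 x2); split; [exists (x1, x2)|apply: ABU].
Qed.

Lemma continuous_mulX {R : realType} {K1 K2 : topologicalType}
    (f1 : K1 -> R) (f2 : K2 -> R) :
  continuous f1 -> continuous f2 -> continuous (fun w : K1 * K2 => f1 w.1 * f2 w.2).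
Proof.
move=> c1 c2 w; apply: continuousM.
- by apply: (continuous_comp _ (c1 _)); exact: cvg_fst.
- by apply: (continuous_comp _ (c2 _)); exact: cvg_snd.
Qed.

Lemma prod_boundary_off_range {X1 X2 : Type} {K1 K2 : Type}
    (i1 : X1 -> K1) (i2 : X2 -> K2) (w : K1 * K2) :
  prod_boundary i1 i2 w -> ~ range (fun z : X1 * X2 => (i1 z.1, i2 z.2)) w.
Proof.
move=> w_bd [[x1 x2] _ jx]; rewrite -jx in w_bd.
by case: w_bd; apply; [exists x1|exists x2].
Qed.

Theorem lemma5p1 (R : realType) (X1 X2 : countType)
  (P1 : X1 -> X1 -> R) (P2 : X2 -> X2 -> R) (e1 : X1) (e2 : X2)
  (h1 : X1 -> X1 -> R) (h2 : X2 -> X2 -> R)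
  (K1 K2 : topologicalType) (i1 : X1 -> K1) (i2 : X2 -> K2)
  (F1 : X1 -> K1 -> R) (F2 : X2 -> K2 -> R) :
  transition_matrix P1 -> irreducible_tm P1 -> aperiodic_tm P1 ->
  ratio_limit P1 e1 h1 ->
  transition_matrix P2 -> irreducible_tm P2 -> aperiodic_tm P2 ->
  ratio_limit P2 e2 h2 ->
  ratio_limit_compactification e1 h1 i1 F1 ->
  ratio_limit_compactification e2 h2 i2 F2 ->
  let h := fun x y : X1 * X2 => h1 x.1 y.1 * h2 x.2 y.2 in
  ratio_limit (tensor_tm P1 P2) (e1, e2) h /\
  (forall x y : X1 * X2,
      RLkernel (e1, e2) h x y = RLkernel e1 h1 x.1 y.1 * RLkernel e2 h2 x.2 y.2) /\
  forall (K : topologicalType) (i : X1 * X2 -> K) (F : X1 * X2 -> K -> R),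
    ratio_limit_compactification (e1, e2) h i F ->
    exists pi : K1 * K2 -> K,
      [/\ continuous pi /\ (forall k : K, exists w, pi w = k),
          (forall x : X1 * X2, pi (i1 x.1, i2 x.2) = i x),
          (forall w, prod_boundary i1 i2 w -> ~ range i (pi w)),
          (forall w v, prod_boundary i1 i2 w -> prod_boundary i1 i2 v ->
              (pi w = pi v <-> prod_approx F1 F2 w v)) &
          (forall (x : X1 * X2) w, prod_boundary i1 i2 w ->
              F x (pi w) = F1 x.1 w.1 * F2 x.2 w.2)].
Proof.
move=> tm1 _ _ rl1 tm2 _ _ rl2 [[cK1 hK1] [inj1 _ op1] dense1 F1ext _]
  [[cK2 hK2] [inj2 _ op2] dense2 F2ext _] h.
split; first exact: ratio_limit_tensor tm1.1 tm2.1 rl1 rl2.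
split; first exact: RLkernel_tensor.
move=> K i F [[cK hK] [injK _ opK] denseK Fext sepF].
pose j (z : X1 * X2) := (i1 z.1, i2 z.2).
pose Phi (x : X1 * X2) (w : K1 * K2) := F1 x.1 w.1 * F2 x.2 w.2.
have inj_j : injective j by move=> [x1 x2] [y1 y2] [/inj1 -> /inj2 ->].
have F_Phi x y : F x (i y) = Phi x (j y).
  by rewrite /Phi /j /= (Fext x).2 RLkernel_tensor (F1ext x.1).2 (F2ext x.2).2.
have compactT : compact [set: K1 * K2] by rewrite -setXTT; exact: compact_setX.
have [pi [[pi_cont pi_onto] pi_j pi_bd pi_eq pi_val]] :=
  @compactification_quotient R _ _ _ _ j i Phi F
    compactT (hausdorff_prod hK1 hK2) inj_j
    (fun z => open_set1X _ _ (op1 z.1) (op2 z.2)) (dense_rangeX _ _ dense1 dense2)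
    cK hK injK opK denseK (fun x => continuous_mulX _ _ (F1ext x.1).1 (F2ext x.2).1)
    (fun x => (Fext x).1) F_Phi sepF.
exists pi; split; [exact: conj pi_cont pi_onto|exact: pi_j| | |].
- by move=> w /prod_boundary_off_range /pi_bd.
- move=> w v /prod_boundary_off_range w_bd /prod_boundary_off_range v_bd.
  rewrite pi_eq //; split => [eq_Phi x1 x2|approx [x1 x2]].
  + exact: eq_Phi (x1, x2).
  + exact: approx.
- by move=> x w _; exact: pi_val.
Qed.
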